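(* For every $n\in\mathbb{N}$ and every $l\in\{0,\ldots,n\}$ the polynomials $A_n^l$ defined in the context factorize as $$A_{n}^{l}=\frac{n!\,l!}{2^{2(n-l)}(n+l+1)!\,(2l)!}\left[\sum_{h=0}^{n-l}\frac{(2n-2h+1)!\,(2l+2h)!}{h!\,(n-l-h)!\,(n-h)!\,(l+h)!}\,\overline{\mathbf{x}}^{\,h}\mathbf{x}^{\,n-l-h}\right]A_{l}^{l},$$ with $A_{l}^{l}=(x_{1}-x_{2}\mathbf{e}_{3})^{l}$.
   Context: $\mathbb{H}$: real quaternions with basis $\mathbf{e}_0=1,\mathbf{e}_1,\mathbf{e}_2,\mathbf{e}_3$, $\mathbf{e}_i\mathbf{e}_j+\mathbf{e}_j\mathbf{e}_i=-2\delta_{ij}$ ($i,j=1,2,3$), $\mathbf{e}_1\mathbf{e}_2=\mathbf{e}_3$. A point $(x_0,x_1,x_2)\in\mathbb{R}^3$ is identified with $\mathbf{x}=x_0+x_1\mathbf{e}_1+x_2\mathbf{e}_2$, and $\overline{\mathbf{x}}=x_0-x_1\mathbf{e}_1-x_2\mathbf{e}_2$ (note $\mathbf{x}$ and $\overline{\mathbf{x}}$ commute). Spherical coordinates: $x_0=r\cos\theta$, $x_1=r\sin\theta\cos\varphi$, $x_2=r\sin\theta\sin\varphi$. Let $P_k$ be the Legendre polynomials and $P_k^m(t)=(1-t^2)^{m/2}\frac{d^m}{dt^m}P_k(t)$ (no Condon–Shortley phase; $P_k^m=0$ for $m>k$). For $n\in\mathbb{N}_0$, $0\le m\le n+1$ put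 $$\mathcal{A}^{m,n}(\theta)=\tfrac12\Big(\sin^2\theta\,\tfrac{d}{dt}[P_{n+1}^m(t)]_{t=\cos\theta}+(n+1)\cos\theta\,P_{n+1}^m(\cos\theta)\Big).$$ For $n\in\mathbb{N}_0$, $l=0,\ldots,n$ define $$A_n^l(\mathbf{x})=\frac{2^{l+1}n!\,r^n}{(n+l+2)!}\Big[(n+l+2)\mathcal{A}^{l,n}(\theta)\big(\cos l\varphi-\sin l\varphi\,\mathbf{e}_3\big)+\mathcal{A}^{l+1,n}(\theta)\big(\cos((l+1)\varphi)\,\mathbf{e}_1+\sin((l+1)\varphi)\,\mathbf{e}_2\big)\Big],$$ a homogeneous polynomial of degree $n$ in $x_0,x_1,x_2$. *)

From HB Require Import structures.
From mathcomp Require Import all_boot all_order all_algebra.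
From mathcomp Require Import all_classical all_reals all_analysis.
Set Implicit Arguments. Unset Strict Implicit. Unset Printing Implicit Defensive.
Import Order.TTheory GRing.Theory Num.Theory.
Local Open Scope ring_scope.

Section Defs.
Variable R : realType.

(* Real quaternions a + b e1 + c e2 + d e3, with e_i^2 = -1, e1 e2 = e3,
   e2 e3 = e1, e3 e1 = e2 (consequence of anticommutation and e1 e2 = e3). *)
Record quat := Quat { q0 : R; q1 : R; q2 : R; q3 : R }.

Definition qadd (p q : quat) : quat :=
  Quat (q0 p + q0 q) (q1 p + q1 q) (q2 p + q2 q) (q3 p + q3 q).
Definition qscale (a : R) (q : quat) : quat :=
  Quat (a * q0 q) (a * q1 q) (a * q2 q) (a * q3 q).
Definition qmul (p q : quat) : quat :=
  Quat (q0 p * q0 q - q1 p * q1 q - q2 p * q2 q - q3 p * q3 q)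
       (q0 p * q1 q + q1 p * q0 q + q2 p * q3 q - q3 p * q2 q)
       (q0 p * q2 q - q1 p * q3 q + q2 p * q0 q + q3 p * q1 q)
       (q0 p * q3 q + q1 p * q2 q - q2 p * q1 q + q3 p * q0 q).
Definition qzero : quat := Quat 0 0 0 0.
Definition qone : quat := Quat 1 0 0 0.
Definition qpow (q : quat) (k : nat) : quat := iter k (qmul q) qone.
Fixpoint qsum (F : nat -> quat) (N : nat) : quat :=
  match N with 0 => qzero | N'.+1 => qadd (qsum F N') (F N') end.

Definition xq (x0 x1 x2 : R) : quat := Quat x0 x1 x2 0.
Definition xbarq (x0 x1 x2 : R) : quat := Quat x0 (- x1) (- x2) 0.

Definition Legendre (k : nat) : {poly R} :=
  (2 ^+ k * (k`!)%:R)^-1 *: (('X ^+ 2 - 1) ^+ k)^`(k).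

(* associated Legendre function without Condon-Shortley phase:
   P_k^m(t) = (1 - t^2)^(m/2) d^m/dt^m P_k(t)  (for |t| <= 1) *)
Definition assocLegendre (k m : nat) (t : R) : R :=
  Num.sqrt (1 - t ^+ 2) ^+ m * ((Legendre k)^`(m)).[t].

Definition calA (m n : nat) (theta : R) : R :=
  2^-1 * (sin theta ^+ 2 * (derive1 (assocLegendre n.+1 m)) (cos theta)
          + (n.+1)%:R * cos theta * assocLegendre n.+1 m (cos theta)).

Definition A_nl (n l : nat) (r theta phi : R) : quat :=
  qscale (2 ^+ l.+1 * (n`!)%:R * r ^+ n / ((n + l + 2)`!)%:R)
    (qadd
      (qscale ((n + l + 2)%:R * calA l n theta)
              (Quat (cos (l%:R * phi)) 0 0 (- sin (l%:R * phi))))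
      (qscale (calA l.+1 n theta)
              (Quat 0 (cos (l.+1%:R * phi)) (sin (l.+1%:R * phi)) 0))).

End Defs.

(* Put t = cos theta, s = sin theta and w = t + i s.  The map [qembed] sending
   a + b i to a + b (cos phi e1 + sin phi e2) embeds C into H as an algebra, with
   x = qembed (r w), so the bracketed sum is the image of r^(n-l) G_(n-l), where
   G_m = sum_h alpha_(m-h) beta_h w^(m-h) conj(w)^h.  Right multiplication by
   A_l^l = (r s)^l (cos l phi - sin l phi e3) sends qembed z to the quaternion
   whose components are Re z and Im z times cos and sin of l phi and (l+1) phi,
   which is the shape of A_n^l.  It remains to identify Re G_m and Im G_m with the
   Legendre brackets in calA^{l,n} and calA^{l+1,n}.  Both satisfy the same
   three-term recurrence in m: for G_m because alpha and beta obey first-order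
   hypergeometric recurrences, for the Legendre side by the Legendre equation for
   the l-th derivative of P_(l+m) and P'_(k+1) = x P'_k + (k+1) P_k.  The first two
   terms agree by direct computation. *)

From mathcomp Require Import all_boot all_order all_algebra.
From mathcomp Require Import all_classical all_reals all_analysis.
From mathcomp Require Import complex.
From mathcomp Require Import ring lra zify.
Set Implicit Arguments.
Unset Strict Implicit.
Unset Printing Implicit Defensive.
Import Order.TTheory GRing.Theory Num.Theory.
Local Open Scope ring_scope.

Lemma eq_of_eqB (R : zmodType) (x y u v : R) : u = v -> x - y = u - v -> x = y.
Proof. by move=> -> /eqP; rewrite subrr subr_eq0 => /eqP. Qed.

Lemma natr_fact_neq0 (R : numDomainType) n : (n`!)%:R != 0 :> R.
Proof. by rewrite pnatr_eq0 -lt0n fact_gt0. Qed.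

Lemma mulr_natSl (R : pzRingType) n (x : R) : n.+1%:R * x = n%:R * x + x.
Proof. by rewrite -natr1 mulrDl mul1r. Qed.

Ltac nonzero := repeat (apply/andP; split);
  rewrite ?natr_fact_neq0 ?expf_neq0 ?pnatr_eq0 //; try (apply: lt0r_neq0; lra).

Section PolyDerivn.
Variable R : comNzRingType.
Implicit Types f p : {poly R}.

Lemma derivn_derivn f a b : (f^`(a))^`(b) = f^`(b + a).
Proof. by rewrite /derivn iterD. Qed.

Lemma derivnMnr f c n : (f * c%:R)^`(n) = f^`(n) * c%:R.
Proof. by rewrite !mulr_natr derivnMn. Qed.

Lemma derivnat n : (n%:R : {poly R})^`() = 0.
Proof. by rewrite -polyC_natr derivC. Qed.

Lemma horner_nat n (x : R) : (n%:R : {poly R}).[x] = n%:R.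
Proof. by rewrite -polyC_natr hornerC. Qed.

Lemma derivn_mulX f k : ('X * f)^`(k.+1) = 'X * f^`(k.+1) + f^`(k) * k.+1%:R.
Proof. by rewrite -[_ * f]addr0 -polyC0 mulrC derivnMXaddC mulr_natr addrC mulrC. Qed.

Lemma derivn_mulX2B1 f k : (('X^2 - 1) * f)^`(k.+2) =
  ('X^2 - 1) * f^`(k.+2) + 'X * f^`(k.+1) * (2 * k.+2)%:R + f^`(k) * (k.+2 * k.+1)%:R.
Proof.
have -> : ('X^2 - 1) * f = 'X * ('X * f) - f by rewrite mulrBl mulrA -expr2 mul1r.
rewrite derivnB derivn_mulX derivn_mulX derivnS derivn_mulX -derivnS !natrM; ring.
Qed.

Lemma derivn_monic_size p : p \is monic -> p^`((size p).-1) = (((size p).-1)`!)%:R.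
Proof.
move=> mon_p; apply/polyP => i; rewrite coef_derivn -polyC_natr coefC.
case: i => [|i]; first by rewrite addn0 ffactnn -lead_coefE (monicP mon_p).
have p_gt0 : (0 < size p)%N by rewrite size_poly_gt0 monic_neq0.
by rewrite nth_default ?mul0rn // -addSnnS prednK // leq_addr.
Qed.
End PolyDerivn.

Section Legendre.
Variable R : realType.
Local Notation P := (Legendre R).

Definition rodrigues k : {poly R} := ('X^2 - 1) ^+ k.

Lemma LegendreE k : P k = (2 ^+ k * (k`!)%:R)^-1 *: (rodrigues k)^`(k).
Proof. by []. Qed.

Lemma rodriguesS k : rodrigues k.+1 = ('X^2 - 1) * rodrigues k.
Proof. exact: exprS. Qed.

Lemma deriv_rodriguesS k : (rodrigues k.+1)^`() = 'X * rodrigues k * (2 * k.+1)%:R.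
Proof.
rewrite /rodrigues deriv_exp derivB derivXn derivC subr0 -mulr_natr natrM /= expr1.
ring.
Qed.

Lemma Legendre_ode k :
  (1 - 'X^2) * (P k)^`(2) - 'X * (P k)^`(1) * 2 + P k * (k%:R * (k%:R + 1)) = 0.
Proof.
case: k => [|j].
  rewrite LegendreE derivn0 !derivnZ derivnS !derivn1 /rodrigues expr0 derivC deriv0.
  by rewrite !(scaler0, mulr0, mul0r, subrr, addr0).
(* Differentiate (X^2 - 1) R' = 2 (j + 1) X R, where R = (X^2 - 1)^(j + 1), j + 2 times. *)
have ode_rod : ('X^2 - 1) * (rodrigues j.+1)^`(j.+3) + 'X * (rodrigues j.+1)^`(j.+2) * 2
    - (rodrigues j.+1)^`(j.+1) * (j.+1%:R * (j.+1%:R + 1)) = 0.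
  have e : ('X^2 - 1) * (rodrigues j.+1)^`() = 'X * rodrigues j.+1 * (2 * j.+1)%:R.
    by rewrite deriv_rodriguesS rodriguesS; ring.
  have := congr1 (derivn j.+2) e.
  rewrite derivn_mulX2B1 derivnMnr derivn_mulX -!derivSn => /eqP.
  rewrite -subr_eq0 => /eqP <-.
  rewrite !natrM; ring.
rewrite LegendreE !derivnZ !derivn_derivn !addSn !add0n -!mul_polyC.
rewrite -[RHS](mulr0 (- (2 ^+ j.+1 * (j.+1`!)%:R)^-1%:P)) -ode_rod; ring.
Qed.

Lemma deriv_LegendreS k : (P k.+1)^`() = 'X * (P k)^`() + P k * k.+1%:R.
Proof.
have c : (2 ^+ k.+1 * (k.+1`!)%:R)^-1%:P * (2 * k.+1)%:R = (2 ^+ k * (k`!)%:R)^-1%:P :> {poly R}.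
  rewrite -polyC_natr -polyCM factS !natrM exprS; congr polyC; field; nonzero.
rewrite !LegendreE !derivZ -!derivnS [in LHS]derivSn deriv_rodriguesS derivnMnr derivn_mulX.
by rewrite -!mul_polyC -c; ring.
Qed.

Lemma Legendre_derivn_ode k l :
  (1 - 'X^2) * (P k)^`(l.+2) - 'X * (P k)^`(l.+1) * (2 * l.+1)%:R
  + (P k)^`(l) * ((k%:R - l%:R) * (k%:R + l%:R + 1)) = 0.
Proof.
elim: l => [|l IH].
  by rewrite -[RHS](Legendre_ode k) derivn0 subr0 addr0.
have := congr1 deriv IH; rewrite deriv0 => <-.
rewrite !(derivD, derivB, derivN, derivMNn, derivMn, derivM, derivX, derivXn, derivnat, derivC).
by rewrite -!derivnS /= expr1 !natrM; ring.
Qed.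

Lemma Legendre_derivnS k l :
  (P k.+1)^`(l.+1) = 'X * (P k)^`(l.+1) + (P k)^`(l) * (k.+1 + l)%:R.
Proof.
elim: l => [|l IH]; first by rewrite derivn1 deriv_LegendreS derivn0 addn0.
by rewrite derivnS IH !(derivD, derivM, derivX, derivnat) -!derivnS addnS; ring.
Qed.

Lemma rodrigues_monic k : rodrigues k \is monic.
Proof. by rewrite monic_exp // -polyC1 monicXnsubC. Qed.

Lemma size_rodrigues k : size (rodrigues k) = (2 * k).+1.
Proof.
rewrite -[LHS]prednK ?size_poly_gt0 ?monic_neq0 ?rodrigues_monic //.
by rewrite size_exp -polyC1 size_XnsubC // mulnC.
Qed.

Definition Legendre_top l : R := (2 ^+ l * (l`!)%:R)^-1 * ((2 * l)`!)%:R.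

Lemma Legendre_derivn_size l : (P l)^`(l) = (Legendre_top l)%:P.
Proof.
have := derivn_monic_size (rodrigues_monic l); rewrite size_rodrigues /= => top.
by rewrite LegendreE derivnZ derivn_derivn addnn -mul2n top -polyC_natr -mul_polyC -polyCM.
Qed.

Lemma Legendre_derivn_gt_size l : (P l)^`(l.+1) = 0.
Proof. by rewrite derivnS Legendre_derivn_size derivC. Qed.
End Legendre.
Arguments Legendre_top {R}.

Section LegendreDerivnValues.
Variables (R : realType) (l : nat) (t : R).
Local Notation P := (Legendre R).

Definition dl j := ((P (l + j))^`(l)).[t].
Definition dl' j := ((P (l + j))^`(l.+1)).[t].
Definition dl'' j := ((P (l + j))^`(l.+2)).[t].

Lemma dl_ode j :
  (1 - t ^+ 2) * dl'' j - 2 * l.+1%:R * t * dl' j + j%:R * (j%:R + 2 * l%:R + 1) * dl j = 0.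
Proof.
have := congr1 (horner^~ t) (Legendre_derivn_ode R (l + j) l).
rewrite /dl /dl' /dl'' !hornerE !horner_nat => <-; rewrite !natrD !natrM /=; ring.
Qed.

Lemma dl'S j : dl' j.+1 = t * dl' j + (j%:R + 2 * l%:R + 1) * dl j.
Proof.
rewrite /dl' /dl addnS Legendre_derivnS !hornerE horner_nat !natrD /=; ring.
Qed.

Lemma dl''S j : dl'' j.+1 = t * dl'' j + (j%:R + 2 * l%:R + 2) * dl' j.
Proof.
rewrite /dl'' /dl' addnS Legendre_derivnS !hornerE horner_nat !natrD /=; ring.
Qed.

Lemma dlS j : j.+1%:R * dl j.+1 = (j%:R + 2 * l%:R + 1) * t * dl j - (1 - t ^+ 2) * dl' j.
Proof.
have ode1 := dl_ode j.+1; have ode0 := dl_ode j.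
rewrite dl''S dl'S in ode1.
have nz : j%:R + 2 * l%:R + 2 != 0 :> R.
  by rewrite -natrM -!natrD pnatr_eq0 addn2.
have comb := congr2 (fun a b => a - t * b) ode1 ode0.
by apply: (mulfI nz); apply: (eq_of_eqB comb) => /=; ring.
Qed.

Lemma dl_0 : dl 0 = Legendre_top l.
Proof. by rewrite /dl addn0 Legendre_derivn_size hornerC. Qed.

Lemma dl'_0 : dl' 0 = 0.
Proof. by rewrite /dl' addn0 Legendre_derivn_gt_size horner0. Qed.

Lemma dl'_1 : dl' 1 = (2 * l%:R + 1) * Legendre_top l.
Proof. by rewrite dl'S dl'_0 dl_0; ring. Qed.

Lemma dl_1 : dl 1 = (2 * l%:R + 1) * t * Legendre_top l.
Proof. by have := dlS 0; rewrite dl'_0 dl_0 mul1r => ->; ring. Qed.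

End LegendreDerivnValues.

Section WeightedConvolution.
Variables (T : comNzRingType) (c p q a b : T) (u v : nat -> T).
Hypothesis u_rec : forall i, i.+1%:R * u i.+1 = (c * i%:R + p) * u i.
Hypothesis v_rec : forall i, i.+1%:R * v i.+1 = (c * i%:R + q) * v i.

Definition conv k := \sum_(h < k.+1) u (k - h) * v h * a ^+ (k - h) * b ^+ h.

(* [k * conv k] split along [k = (k - h) + h]: each half obeys a first-order
   recurrence, and eliminating both gives the three-term recurrence [convSS]. *)
Definition convL k := \sum_(h < k.+1) (k - h)%:R * (u (k - h) * v h * a ^+ (k - h) * b ^+ h).
Definition convR k := \sum_(h < k.+1) h%:R * (u (k - h) * v h * a ^+ (k - h) * b ^+ h).

Lemma convLR k : convL k + convR k = k%:R * conv k.
Proof.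
rewrite -big_split mulr_sumr; apply: eq_bigr => h _ /=.
by rewrite -mulrDl -natrD subnK // -ltnS.
Qed.

Lemma convLS k : convL k.+1 = a * (c * convL k + p * conv k).
Proof.
rewrite /convL big_ord_recr /= subnn mul0r addr0.
rewrite /conv !mulr_sumr -big_split mulr_sumr; apply: eq_bigr => h _ /=.
have h_le_k : (h <= k)%N by rewrite -ltnS.
rewrite subSn //; set m := (k - h)%N.
have rec := congr1 (fun x => x * (v h * a ^+ m.+1 * b ^+ h)) (u_rec m).
by apply: (eq_of_eqB rec) => /=; rewrite exprS; ring.
Qed.

Lemma convRS k : convR k.+1 = b * (c * convR k + q * conv k).
Proof.
rewrite /convR big_ord_recl /= mul0r add0r.
rewrite /conv !mulr_sumr -big_split mulr_sumr; apply: eq_bigr => h _ /=.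
rewrite /bump /= add1n subSS; set m := (k - h)%N.
have rec := congr1 (fun x => x * (u m * a ^+ m * b ^+ h.+1)) (v_rec h).
by apply: (eq_of_eqB rec) => /=; rewrite exprS; ring.
Qed.

Lemma convSS k : k.+2%:R * conv k.+2 =
  (c * k.+1%:R * (a + b) + p * a + q * b) * conv k.+1
  - c * a * b * (c * k%:R + p + q) * conv k.
Proof.
rewrite -convLR convLS convRS.
have e1 := convLR k.+1; have e0 := convLR k.
rewrite (_ : _ * conv k.+1 - _ = c * (a + b) * (k.+1%:R * conv k.+1)
  + (p * a + q * b) * conv k.+1 - c * a * b * (c * (k%:R * conv k) + (p + q) * conv k)); last by ring.
rewrite -e1 -e0 convLS convRS; ring.
Qed.

Lemma conv1 : conv 1 = (p * a + q * b) * conv 0.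
Proof.
have := convLR 1; rewrite convLS convRS /convL /convR !big_ord1 /= !mul0r !mulr0 !add0r mul1r => <-.
ring.
Qed.

End WeightedConvolution.

Section LegendreConvolution.
Variable R : realType.
Local Open Scope complex_scope.

Lemma complex_nat n : (n%:R : R[i]) = n%:R +i* 0.
Proof. by rewrite -(rmorph_nat (real_complex R)). Qed.

Definition alpha l j : R := ((2 * l + 2 * j + 1)`!)%:R / ((j`!)%:R * ((l + j)`!)%:R).
Definition beta l h : R := ((2 * l + 2 * h)`!)%:R / ((h`!)%:R * ((l + h)`!)%:R).

Lemma alpha_rec l k : k.+1%:R * alpha l k.+1 = (4 * k%:R + (4 * l + 6)%:R) * alpha l k.
Proof.
rewrite /alpha (_ : (2 * l + 2 * k.+1 + 1 = (2 * l + 2 * k + 1).+2)%N); last by lia.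
have l_ge0 := ler0n R l; have k_ge0 := ler0n R k.
rewrite (addnS l k) !factS !natrM; field; nonzero.
Qed.

Lemma beta_rec l k : k.+1%:R * beta l k.+1 = (4 * k%:R + (4 * l + 2)%:R) * beta l k.
Proof.
rewrite /beta (_ : (2 * l + 2 * k.+1 = (2 * l + 2 * k).+2)%N); last by lia.
have l_ge0 := ler0n R l; have k_ge0 := ler0n R k.
rewrite (addnS l k) !factS !natrM; field; nonzero.
Qed.

Lemma alpha_beta_coef n l h : (l + h <= n)%N ->
  ((2 * n - 2 * h + 1)`!)%:R * ((2 * l + 2 * h)`!)%:R /
    ((h`!)%:R * ((n - l - h)`!)%:R * ((n - h)`!)%:R * ((l + h)`!)%:R)
  = alpha l (n - l - h) * beta l h.
Proof.
move=> le_lhn; rewrite /alpha /beta.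
rewrite (_ : (2 * l + 2 * (n - l - h) + 1 = 2 * n - 2 * h + 1)%N); last by lia.
rewrite (_ : (l + (n - l - h) = n - h)%N); last by lia.
by field; nonzero.
Qed.

Variables (l : nat) (t s : R).
Hypothesis ts1 : t ^+ 2 + s ^+ 2 = 1.
Local Notation p := (4 * l + 6)%:R.
Local Notation q := (4 * l + 2)%:R.

Definition G m : R[i] :=
  conv (t +i* s) (t -i* s) (fun j => (alpha l j)%:C) (fun j => (beta l j)%:C) m.

Lemma alphaC_rec j : j.+1%:R * (alpha l j.+1)%:C = (4 * j%:R + p%:C) * (alpha l j)%:C.
Proof. by rewrite !complex_nat -!complexr0; simpc; rewrite alpha_rec. Qed.

Lemma betaC_rec j : j.+1%:R * (beta l j.+1)%:C = (4 * j%:R + q%:C) * (beta l j)%:C.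
Proof. by rewrite !complex_nat -!complexr0; simpc; rewrite beta_rec. Qed.

Lemma w_unit : (t +i* s) * (t -i* s) = 1.
Proof.
rewrite -[1]/(1 +i* 0); simpc; congr (_ +i* _); last by ring.
by rewrite -ts1; ring.
Qed.

Lemma G_0 : G 0 = (alpha l 0 * beta l 0)%:C.
Proof. by rewrite /G /conv big_ord1 !expr0 !mulr1 -rmorphM. Qed.

Lemma G_1 :
  complex.Re (G 1) = (p + q) * t * complex.Re (G 0) - (p - q) * s * complex.Im (G 0)
  /\ complex.Im (G 1) = (p + q) * t * complex.Im (G 0) + (p - q) * s * complex.Re (G 0).
Proof.
have := conv1 (t +i* s) (t -i* s) alphaC_rec betaC_rec; rewrite -/(G _) -/(G _).
move: (G 1) (G 0) => [a1 b1] [a0 b0] /=; rewrite -!complexr0; simpc => -[re im].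
by split; [apply: (eq_of_eqB re) | apply: (eq_of_eqB im)]; ring.
Qed.

Lemma G_rec k :
  k.+2%:R * complex.Re (G k.+2) =
    (8 * k.+1%:R + p + q) * t * complex.Re (G k.+1) - (p - q) * s * complex.Im (G k.+1)
    - 4 * (4 * k%:R + p + q) * complex.Re (G k)
  /\ k.+2%:R * complex.Im (G k.+2) =
    (8 * k.+1%:R + p + q) * t * complex.Im (G k.+1) + (p - q) * s * complex.Re (G k.+1)
    - 4 * (4 * k%:R + p + q) * complex.Im (G k).
Proof.
have := convSS (t +i* s) (t -i* s) alphaC_rec betaC_rec k.
rewrite -[4 * _ * (t -i* s)]mulrA w_unit mulr1.
rewrite -/(G _) -/(G _) -/(G _); move: (G k.+2) (G k.+1) (G k) => [a2 b2] [a1 b1] [a0 b0] /=.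
rewrite !complex_nat -!complexr0; simpc => -[re im].
by split; [apply: (eq_of_eqB re) | apply: (eq_of_eqB im)]; ring.
Qed.

Definition G_scale m : R := 2 ^+ l * 4 ^+ m * ((2 * l)`!)%:R / (l`!)%:R.

(* These are the brackets of calA^{l, l+m} and calA^{l+1, l+m} (see [calAE]),
   written with [d_j = P_(l+j)^(l)(t)]. *)
Definition G_legendre m :=
  complex.Re (G m) = G_scale m * ((1 - t ^+ 2) * dl' l t m.+1 + m.+1%:R * t * dl l t m.+1)
  /\ complex.Im (G m) = s * (G_scale m * (t * dl' l t m.+1 - m.+1%:R * dl l t m.+1)).

Lemma dlSE j : dl l t j.+1 =
  ((j%:R + 2 * l%:R + 1) * t * dl l t j - (1 - t ^+ 2) * dl' l t j) / j.+1%:R.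
Proof. by rewrite -dlS mulrC mulKf // pnatr_eq0. Qed.

Lemma mul_ss (c y : R) : c * s * (s * y) = c * (1 - t ^+ 2) * y.
Proof. by rewrite -ts1; ring. Qed.

Lemma G_legendre0 : G_legendre 0.
Proof.
have l_ge0 := ler0n R l.
rewrite /G_legendre G_0 /= dl_1 dl'_1 /G_scale /Legendre_top /alpha /beta.
rewrite !muln0 !addn0 fact0 addn1 factS natrM.
by split; [field; nonzero | ring].
Qed.

Lemma G_legendre1 : G_legendre 1.
Proof.
have l_ge0 := ler0n R l; have [re0 im0] := G_legendre0; have [re1 im1] := G_1.
rewrite /G_legendre re1 im1 re0 im0 (dlSE 1) (dl'S _ _ 1) dl_1 dl'_1 mul_ss /G_scale.
by split; field; nonzero.
Qed.

Lemma G_legendreSS k : G_legendre k -> G_legendre k.+1 -> G_legendre k.+2.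
Proof.
move=> [re0 im0] [re1 im1]; have [reS imS] := G_rec k.
have l_ge0 := ler0n R l; have k_ge0 := ler0n R k.
have nz : k.+2%:R != 0 :> R by rewrite pnatr_eq0.
split; apply: (mulfI nz).
- rewrite reS re0 re1 im1 mul_ss (dlSE k.+2) (dl'S _ _ k.+2) (dlSE k.+1) (dl'S _ _ k.+1).
  by rewrite /G_scale !exprS; field; nonzero.
- rewrite imS im0 re1 im1 (dlSE k.+2) (dl'S _ _ k.+2) (dlSE k.+1) (dl'S _ _ k.+1).
  by rewrite /G_scale !exprS; field; nonzero.
Qed.

Lemma G_legendreP m : G_legendre m.
Proof.
suff : G_legendre m /\ G_legendre m.+1 by case.
elim: m => [|m [IHm IHmS]]; first by split; [exact: G_legendre0 | exact: G_legendre1].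
by split => //; apply: G_legendreSS.
Qed.
End LegendreConvolution.

Section QuaternionEmbedding.
Variables (R : realType) (phi : R).
Local Open Scope complex_scope.

Lemma qscaleA (a b : R) x : qscale a (qscale b x) = qscale (a * b) x.
Proof. by case: x => *; rewrite /qscale /=; congr Quat; ring. Qed.

Lemma qmulZr (a : R) x y : qmul x (qscale a y) = qscale a (qmul x y).
Proof. by case: x => *; case: y => *; rewrite /qmul /qscale /=; congr Quat; ring. Qed.

Definition qembed (z : R[i]) : quat R :=
  Quat (complex.Re z) (complex.Im z * cos phi) (complex.Im z * sin phi) 0.

Lemma qembedM z w : qmul (qembed z) (qembed w) = qembed (z * w).
Proof.
case: z => a b; case: w => c d; rewrite /qmul /qembed /=; congr Quat; try ring.
by apply: (eq_of_eqB (congr1 (fun x => b * d * x) (esym (cos2Dsin2 phi)))); ring.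
Qed.

Lemma qembedD z w : qadd (qembed z) (qembed w) = qembed (z + w).
Proof. by case: z => a b; case: w => c d; rewrite /qadd /qembed /=; congr Quat; ring. Qed.

Lemma qembedZ (c : R) z : qscale c (qembed z) = qembed (c%:C * z).
Proof. by case: z => a b; rewrite /qscale /qembed /=; congr Quat; ring. Qed.

Lemma qembedX z k : qpow (qembed z) k = qembed (z ^+ k).
Proof.
elim: k => [|k IHk]; first by rewrite /qpow /qembed /qone /=; congr Quat; ring.
by rewrite /qpow iterS -/(qpow _ k) IHk qembedM exprS.
Qed.

Lemma qsum_qembed (F : nat -> quat R) (G : nat -> R[i]) N :
  (forall h, F h = qembed (G h)) -> qsum F N = qembed (\sum_(h < N) G h).
Proof.
move=> FG; elim: N => [|N IHN]; first by rewrite big_ord0 /qembed /qzero /=; congr Quat; ring.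
by rewrite /= IHN FG qembedD big_ord_recr.
Qed.

Definition qrot (l : nat) : quat R := Quat (cos (l%:R * phi)) 0 0 (- sin (l%:R * phi)).

Lemma qpow_qrot (rho : R) l : qpow (qscale rho (qrot 1)) l = qscale (rho ^+ l) (qrot l).
Proof.
elim: l => [|l IHl].
  by rewrite /qpow /= /qone /qrot /qscale mulr0n mul0r cos0 sin0 /=; congr Quat; ring.
rewrite /qpow iterS -/(qpow _ l) IHl /qmul /qrot /qscale /= (mulr_natSl l) cosD sinD mulr1n mul1r exprS.
by congr Quat; ring.
Qed.

Definition qtwist l (z : R[i]) : quat R :=
  Quat (complex.Re z * cos (l%:R * phi)) (complex.Im z * cos (l.+1%:R * phi))
       (complex.Im z * sin (l.+1%:R * phi)) (- (complex.Re z * sin (l%:R * phi))).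

Lemma qembed_mul_qrot l z : qmul (qembed z) (qrot l) = qtwist l z.
Proof.
by case: z => a b; rewrite /qmul /qembed /qrot /qtwist /= mulr_natSl cosD sinD; congr Quat; ring.
Qed.

Lemma qtwistZ l (c : R) z : qtwist l (c%:C * z) = qscale c (qtwist l z).
Proof. by case: z => a b; rewrite /qtwist /qscale /=; congr Quat; ring. Qed.

End QuaternionEmbedding.

Section CalA.
Variable R : realType.
Local Notation P := (Legendre R).

Lemma sqrt1B_cos2 (th : R) : 0 <= th -> th <= pi -> Num.sqrt (1 - cos th ^+ 2) = sin th.
Proof.
by move=> th_ge0 th_lepi; rewrite -sin2cos2 sqrtr_sqr ger0_norm // sin_ge0_pi ?th_ge0.
Qed.

Lemma derive1_assocLegendre k m (t : R) : 0 < 1 - t ^+ 2 ->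
  derive1 (assocLegendre k m) t =
    Num.sqrt (1 - t ^+ 2) ^+ m * ((P k)^`(m.+1)).[t]
    - m%:R * t * Num.sqrt (1 - t ^+ 2) ^+ m.-1 / Num.sqrt (1 - t ^+ 2) * ((P k)^`(m)).[t].
Proof.
move=> t_in; set Q := (P k)^`(m); set g := horner (1 - 'X^2 : {poly R}).
have gE y : g y = 1 - y ^+ 2 by rewrite /g !hornerE.
have -> : assocLegendre k m = ((Num.sqrt \o g) ^+ m) * horner Q.
  by apply: funext => y; rewrite /assocLegendre /= -/Q mulrfctE exprfctE /= gE.
have dg : is_derive t 1 g ((1 - 'X^2 : {poly R})^`().[t]) by apply: is_derive_poly.
have dsqrt : is_derive (g t) 1 Num.sqrt (2 * Num.sqrt (g t))^-1.
  by apply: is_derive1_sqrt; rewrite gE.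
have dQ : is_derive t 1 (horner Q) (Q^`().[t]) by apply: is_derive_poly.
have d := is_deriveM (is_deriveX m (is_derive1_comp dsqrt dg)) dQ.
rewrite derive1E (@derive_val _ _ _ _ _ _ _ d) /= exprfctE /= gE /GRing.scale /= -derivnS.
rewrite derivB derivC derivXn /= expr1 sub0r hornerN hornerMn hornerX.
have : Num.sqrt (1 - t ^+ 2) != 0 by rewrite sqrtr_eq0 -ltNge.
by move=> nz; field.
Qed.

Lemma calAE m n th : 0 <= th -> th <= pi ->
  calA m n th = 2^-1 * sin th ^+ m *
    ((1 - cos th ^+ 2) * ((P n.+1)^`(m.+1)).[cos th]
     + (n.+1%:R - m%:R) * cos th * ((P n.+1)^`(m)).[cos th]).
Proof.
move=> th_ge0 th_lepi.
rewrite /calA {2}/assocLegendre sqrt1B_cos2 //.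
have [s0|s0] := eqVneq (sin th) 0.
  rewrite -sin2cos2 s0 expr0n /= !mul0r add0r.
  case: m => [|j]; first by rewrite !expr0 subr0; ring.
  by rewrite expr0n /= !(mulr0, mul0r).
rewrite derive1_assocLegendre; last by rewrite -sin2cos2 exprn_even_gt0.
rewrite sqrt1B_cos2 // -sin2cos2.
case: m => [|j]; first by rewrite !expr0 /=; ring.
by rewrite /= !(exprS (sin th) j); field.
Qed.

End CalA.

Section Factorization.
Variables (R : realType) (r th phi : R).
Hypotheses (th_ge0 : 0 <= th) (th_lepi : th <= pi).
Local Open Scope complex_scope.
Local Notation t := (cos th).
Local Notation s := (sin th).

Definition A_coef n l : R :=
  (n`!)%:R * (l`!)%:R / (2 ^+ (2 * (n - l)) * ((n + l + 1)`!)%:R * ((2 * l)`!)%:R).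

Lemma A_nlE n l : (l <= n)%N -> A_nl n l r th phi =
  qscale (A_coef n l * r ^+ n * s ^+ l) (qtwist phi l (G l t s (n - l))).
Proof.
move=> /subnKC <-; move: (n - l)%N => m; rewrite addKn.
have [re im] := G_legendreP l (cos2Dsin2 th) m; rewrite /G_scale in re im.
rewrite /A_nl /qtwist /qscale /qadd /= !calAE // -addnS -/(dl _ _ _) -/(dl' _ _ _) -/(dl'' _ _ _).
have ode' : (1 - t ^+ 2) * dl'' l t m.+1 = 2 * l.+1%:R * t * dl' l t m.+1
    - m.+1%:R * (m.+1%:R + 2 * l%:R + 1) * dl l t m.+1.
  by apply: (eq_of_eqB (dl_ode l t m.+1)); ring.
rewrite re im ode' /A_coef addKn (_ : (l + m + l + 2 = (l + m + l + 1).+1)%N); last by lia.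
rewrite factS natrM !(exprS _ l) exprM (_ : (2 : R) ^+ 2 = 4); last by ring.
have l_ge0 := ler0n R l; have m_ge0 := ler0n R m.
by congr Quat; field; nonzero.
Qed.

Lemma A_llE l : A_nl l l r th phi = qscale ((r * s) ^+ l) (qrot phi l).
Proof.
rewrite A_nlE // subnn G_0 /qtwist /qrot /qscale /= /A_coef /alpha /beta subnn.
rewrite !muln0 !addn0 fact0 expr0 exprMn addnn -mul2n addn1 factS natrM.
have l_ge0 := ler0n R l.
by congr Quat; rewrite ?mul0r ?mulr0 //; field; nonzero.
Qed.

Lemma xq_qembed : xq (r * t) (r * s * cos phi) (r * s * sin phi) = qembed phi (r%:C * (t +i* s)).
Proof. by rewrite /xq /qembed -complexr0; simpc; congr Quat; ring. Qed.

Lemma xbarq_qembed :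
  xbarq (r * t) (r * s * cos phi) (r * s * sin phi) = qembed phi (r%:C * (t -i* s)).
Proof. by rewrite /xbarq /qembed -complexr0; simpc; congr Quat; ring. Qed.

Lemma qsum_xbarq_xq n l : (l <= n)%N ->
  qsum (fun h => qscale (((2 * n - 2 * h + 1)`!)%:R * ((2 * l + 2 * h)`!)%:R /
                         ((h`!)%:R * ((n - l - h)`!)%:R * ((n - h)`!)%:R * ((l + h)`!)%:R))
      (qmul (qpow (xbarq (r * t) (r * s * cos phi) (r * s * sin phi)) h)
            (qpow (xq (r * t) (r * s * cos phi) (r * s * sin phi)) (n - l - h))))
    (n - l).+1
  = qembed phi ((r ^+ (n - l))%:C * G l t s (n - l)).
Proof.
move=> le_ln.
erewrite qsum_qembed; last by move=> h; rewrite xq_qembed xbarq_qembed !qembedX qembedM qembedZ.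
congr qembed; rewrite /G /conv mulr_sumr; apply: eq_bigr => -[h /=]; rewrite ltnS => le_h _.
have -> : (r ^+ (n - l))%:C = r%:C ^+ h * r%:C ^+ (n - l - h) by rewrite rmorphXn -exprD subnKC.
by rewrite alpha_beta_coef -?leq_subRL // rmorphM !exprMn; ring.
Qed.

End Factorization.

Theorem mainTheorem4 (R : realType) (n l : nat) (hl : (l <= n)%N)
  (x0 x1 x2 r theta phi : R)
  (hr : 0 <= r) (htheta0 : 0 <= theta) (hthetapi : theta <= pi)
  (hx0 : x0 = r * cos theta)
  (hx1 : x1 = r * sin theta * cos phi)
  (hx2 : x2 = r * sin theta * sin phi) :
  A_nl n l r theta phi =
    qscale ((n`!)%:R * (l`!)%:R /
            (2 ^+ (2 * (n - l)) * ((n + l + 1)`!)%:R * (((2 * l)`!)%:R)))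
      (qmul
        (qsum (fun h =>
           qscale (((2 * n - 2 * h + 1)`!)%:R * ((2 * l + 2 * h)`!)%:R /
                   ((h`!)%:R * ((n - l - h)`!)%:R * ((n - h)`!)%:R
                    * ((l + h)`!)%:R))
             (qmul (qpow (xbarq x0 x1 x2) h) (qpow (xq x0 x1 x2) (n - l - h))))
          (n - l).+1)
        (A_nl l l r theta phi))
  /\ A_nl l l r theta phi = qpow (Quat x1 0 0 (- x2)) l.
Proof.
rewrite hx0 hx1 hx2 A_llE //; split.
  rewrite A_nlE // qsum_xbarq_xq // qmulZr qembed_mul_qrot qtwistZ !qscaleA.
  have -> : r ^+ n = r ^+ l * r ^+ (n - l) by rewrite -exprD subnKC.
  by congr qscale; rewrite exprMn /A_coef; ring.
rewrite -qpow_qrot; congr qpow.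
by rewrite /qscale /qrot /= mulr1n mul1r; congr Quat; ring.
Qed.
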